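(* For every co-comparability graph $G$, $\operatorname{box}(G)\le 2\Delta(G)+1$, where $\Delta(G)$ is the maximum degree of $G$.
   Context: A comparability graph is a graph whose vertex set admits a partial order such that two distinct vertices are adjacent iff they are comparable; $G$ is a co-comparability graph if its complement is a comparability graph. The boxicity $\operatorname{box}(G)$ is the minimum $b$ such that $G$ is the intersection graph of axis-parallel boxes in $\mathbb{R}^b$ (products of $b$ closed intervals), one box per vertex. *)

From mathcomp Require Import all_boot.
From Stdlib Require Import Reals.
Set Implicit Arguments. Unset Strict Implicit. Unset Printing Implicit Defensive.

Definition simple_graph (T : finType) (e : rel T) : Prop :=
  (forall x y, e x y = e y x) /\ (forall x, e x x = false).

Definition partial_order (T : finType) (le : rel T) : Prop :=
  (forall x, le x x) /\
  (forall x y, le x y -> le y x -> x = y) /\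
  (forall x y z, le x y -> le y z -> le x z).

Definition comparability (T : finType) (e : rel T) : Prop :=
  exists le : rel T, partial_order le /\
    forall x y, x != y -> (e x y <-> (le x y || le y x)).

Definition compl_graph (T : finType) (e : rel T) : rel T :=
  fun x y => (x != y) && ~~ e x y.

Definition cocomparability (T : finType) (e : rel T) : Prop :=
  comparability (compl_graph e).

Definition box_rep (T : finType) (e : rel T) (b : nat) : Prop :=
  exists (l r : 'I_b -> T -> R),
    (forall i v, (l i v <= r i v)%R) /\
    forall u v, u != v ->
      (e u v <-> forall i, (l i u <= r i v)%R /\ (l i v <= r i u)%R).

Definition boxicity_le (T : finType) (e : rel T) (k : nat) : Prop :=
  exists b, (b <= k)%N /\ box_rep e b.

(* maximum degree Delta(G) (0 for the empty graph) *)
Definition max_degree (T : finType) (e : rel T) : nat :=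
  \max_(v : T) #|[set u | e v u]|.

From mathcomp Require Import all_boot.
From Stdlib Require Import Reals.
From mathcomp Require Import zify.

Set Implicit Arguments. Unset Strict Implicit. Unset Printing Implicit Defensive.

(* A linear extension of the partial order on the complement orders the
   vertices so that no edge x w jumps over a vertex v adjacent to neither x
   nor w (an umbrella-free ordering): otherwise x < v < w would be a chain
   of the order, making x w a non-edge.  Colour the vertices properly.  In
   coordinate i, give v the interval from the leftmost of v and its
   i-coloured neighbours to v itself if v has colour i, and to the rightmost
   of v and its neighbours otherwise.  Adjacent vertices get intersecting
   intervals in every coordinate; for a non-edge u < v, the coordinate of
   u's colour separates them, since an equally coloured neighbour y of v
   left of u would be adjacent to u by umbrella-freeness.  Colouring by
   position modulo 2 Delta + 1 is proper because every vertex strictly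
   between the ends of an edge is adjacent to one of them. *)

Lemma linear_extension (T : finType) (le : rel T) :
  partial_order le ->
  exists p : T -> nat, injective p /\ forall x y, x != y -> le x y -> p x < p y.
Proof.
move=> [le_refl [le_anti le_trans]].
pose down v := #|[set u | le u v]|.
have down_mono x y : x != y -> le x y -> down x < down y.
  move=> xy lxy; apply: proper_card; apply/properP; split.
    by apply/subsetP => u; rewrite !inE => /le_trans; apply.
  exists y; rewrite !inE ?le_refl //; apply/negP => lyx.
  by move/eqP: xy; apply; apply: le_anti.
exists (fun v => down v * #|T| + enum_rank v); split.
- move=> x y /(congr1 (modn^~ #|T|)).
  rewrite !modnMDl !modn_small ?ltn_ord // => /val_inj; exact: enum_rank_inj.
- move=> x y xy lxy; have := down_mono x y xy lxy.
  have := ltn_ord (enum_rank x); set N := #|T|; nia.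
Qed.

Definition umbrella_free (T : finType) (e : rel T) (p : T -> nat) : Prop :=
  forall x v w, p x < p v -> p v < p w -> e x w -> e x v || e v w.

Lemma cocomparability_umbrella_free (T : finType) (e : rel T) :
  simple_graph e -> cocomparability e ->
  exists p : T -> nat, injective p /\ umbrella_free e p.
Proof.
move=> [_ e_irr] [le [le_po e_compl]].
have [p [p_inj p_mono]] := linear_extension le_po.
have [_ [_ le_trans]] := le_po.
have non_edge_oriented x y : p x < p y -> ~~ e x y -> le x y.
  move=> pxy nexy; have xy : x != y by apply: contraTneq pxy => ->; rewrite ltnn.
  have /orP[//|lyx] : le x y || le y x.
    by apply/(e_compl _ _ xy); rewrite /compl_graph xy.
  by have := p_mono y x; rewrite eq_sym xy lyx => /(_ isT isT); lia.
exists p; split => // x v w pxv pvw exw.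
apply/negPn/negP; rewrite negb_or => /andP[nexv nevw].
have xw : x != w by apply: contraTneq exw => ->; rewrite e_irr.
have : compl_graph e x w.
  apply/(e_compl _ _ xw).
  by rewrite (le_trans _ _ _ (non_edge_oriented _ _ pxv nexv)
                              (non_edge_oriented _ _ pvw nevw)).
by rewrite /compl_graph exw andbF.
Qed.

Section UmbrellaFreeOrdering.

Variables (T : finType) (e : rel T) (p : T -> nat).
Hypotheses (e_sym : forall x y, e x y = e y x) (e_irr : forall x, e x x = false).
Hypotheses (p_inj : injective p) (p_umbrella : umbrella_free e p).

Lemma neq_lep_ltp x y : x != y -> p x <= p y -> p x < p y.
Proof. by move=> xy; rewrite leq_eqVlt (inj_eq p_inj) (negbTE xy). Qed.

Definition position v := #|[set z | p z < p v]|.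

Lemma position_lt a b : p a < p b -> position a < position b.
Proof.
move=> pab; apply: proper_card; apply/properP; split.
  by apply/subsetP => z; rewrite !inE => /ltn_trans; apply.
by exists a; rewrite !inE ?ltnn.
Qed.

Lemma position_edge_gap a b : e a b -> p a < p b ->
  position b <= position a + #|[set u | e a u]| + #|[set u | e b u]|.
Proof.
move=> eab pab; pose S := [set z | p a <= p z < p b].
have below_b : [set z | p z < p b] \subset [set z | p z < p a] :|: S.
  apply/subsetP => z; rewrite !inE => pzb.
  by case: (ltnP (p z) (p a)) => //= ->.
have S_nbhd : S \subset [set u | e a u] :|: [set u | e b u].
  apply/subsetP => z; rewrite !inE => /andP[paz pzb].
  case: (eqVneq z a) => [->|za]; first by rewrite e_sym eab orbT.
  have az : a != z by rewrite eq_sym.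
  have /orP[-> // | ezb] := p_umbrella (neq_lep_ltp az paz) pzb eab.
  by rewrite (e_sym b) ezb orbT.
have := subset_leq_card below_b; have := subset_leq_card S_nbhd.
rewrite /position; have [c1 _] := leq_card_setU [set z | p z < p a] S.
have [c2 _] := leq_card_setU [set u | e a u] [set u | e b u].
lia.
Qed.

Lemma degree_le_max_degree v : #|[set u | e v u]| <= max_degree e.
Proof. exact: (leq_bigmax (F := fun v => #|[set u | e v u]|)). Qed.

Lemma exists_proper_colouring :
  exists col : T -> 'I_(2 * max_degree e + 1), forall a b, e a b -> col a != col b.
Proof.
have m_gt0 : 0 < 2 * max_degree e + 1 by rewrite addn1.
exists (fun v => Ordinal (ltn_pmod (position v) m_gt0)).
suff col_lt a b : e a b -> p a < p b ->
    position a %% (2 * max_degree e + 1) != position b %% (2 * max_degree e + 1).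
  move=> a b eab; case: (ltngtP (p a) (p b)) => pab.
  - exact: col_lt.
  - by rewrite eq_sym col_lt // e_sym.
  - by move: eab; rewrite (p_inj pab) e_irr.
move=> eab pab; have pos_ab := position_lt pab.
have gap := position_edge_gap eab pab.
have := degree_le_max_degree a; have := degree_le_max_degree b.
rewrite eq_sym eqn_mod_dvd ?(ltnW pos_ab) // => da db.
apply/negP => /dvdn_leq; rewrite subn_gt0 => /(_ pos_ab); lia.
Qed.

Variables (k : nat) (col : T -> 'I_k).
Hypothesis col_proper : forall a b, e a b -> col a != col b.

Definition left_end (i : 'I_k) v :=
  p [arg min_(y < v | (y == v) || e v y && (col y == i)) p y].

Definition right_end (i : 'I_k) v :=
  if col v == i then p v else p [arg max_(y > v | (y == v) || e v y) p y].

Lemma left_end_le i v y : (y == v) || e v y && (col y == i) -> left_end i v <= p y.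
Proof.
by move=> hy; rewrite /left_end; case: arg_minnP => [|z _]; [rewrite eqxx | apply].
Qed.

Lemma left_end_attained i v :
  left_end i v = p v \/ exists y, [/\ e v y, col y = i & left_end i v = p y].
Proof.
rewrite /left_end; case: arg_minnP => [|z /orP[/eqP -> | /andP[evz /eqP cz]] _].
- by rewrite eqxx.
- by left.
- by right; exists z.
Qed.

Lemma right_end_ge i v : p v <= right_end i v.
Proof.
rewrite /right_end; case: ifP => // _.
by case: arg_maxnP => [|z _]; [rewrite eqxx | apply; rewrite eqxx].
Qed.

Lemma le_right_end i v y : col v != i -> e v y -> p y <= right_end i v.
Proof.
move=> cv evy; rewrite /right_end (negbTE cv).
by case: arg_maxnP => [|z _]; [rewrite eqxx | apply; rewrite evy orbT].
Qed.

Lemma box_edge i u v : e u v -> left_end i u <= right_end i v.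
Proof.
move=> euv; case: (eqVneq (col v) i) => cv.
  by rewrite /right_end cv eqxx; apply: left_end_le; rewrite euv cv eqxx orbT.
have u_le_v : p u <= right_end i v by apply: le_right_end; rewrite // e_sym.
by apply: leq_trans u_le_v; apply: left_end_le; rewrite eqxx.
Qed.

Lemma box_non_edge u v : p u < p v -> ~~ e u v ->
  right_end (col u) u < left_end (col u) v.
Proof.
move=> puv neuv; rewrite /right_end eqxx.
have [-> // | [y [evy cy ->]]] := left_end_attained (col u) v.
rewrite ltnNge; apply/negP => pyu.
have yu : y != u by apply: contraNneq neuv => <-; rewrite e_sym.
have /orP[eyu | euv] := p_umbrella (neq_lep_ltp yu pyu) puv (etrans (e_sym _ _) evy).
  by have := col_proper eyu; rewrite cy eqxx.
by rewrite euv in neuv.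
Qed.

Lemma umbrella_free_box_rep : box_rep e k.
Proof.
exists (fun i v => INR (left_end i v)), (fun i v => INR (right_end i v)); split.
  move=> i v; apply/le_INR/leP.
  by apply: leq_trans (right_end_ge i v); apply: left_end_le; rewrite eqxx.
move=> u v uv; split.
  by move=> euv i; split; apply/le_INR/leP; apply: box_edge; rewrite // e_sym.
case euv: (e u v) => // boxes_meet; exfalso.
have separated a b : p a < p b -> ~~ e a b ->
    (INR (left_end (col a) b) <= INR (right_end (col a) a))%R -> False.
  by move=> pab neab /INR_le/leP; have := box_non_edge pab neab; lia.
case: (ltngtP (p u) (p v)) => puv.
- exact: (separated u v puv (negbT euv) (proj2 (boxes_meet (col u)))).
- by apply: (separated v u puv _ (proj1 (boxes_meet (col v)))); rewrite e_sym euv.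
- by move/eqP: uv; apply; apply: p_inj.
Qed.

End UmbrellaFreeOrdering.

Theorem theorem8 (T : finType) (e : rel T) :
  simple_graph e -> cocomparability e ->
  boxicity_le e (2 * max_degree e + 1).
Proof.
move=> simple_e /(cocomparability_umbrella_free simple_e) [p [p_inj p_umbrella]].
have [e_sym e_irr] := simple_e.
have [col col_proper] := exists_proper_colouring e_sym e_irr p_inj p_umbrella.
exists (2 * max_degree e + 1); split => //.
exact: (umbrella_free_box_rep e_sym p_inj p_umbrella col_proper).
Qed.
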